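(* Let $d\ge 1$ and consider the linear hyperbolic system $\partial_t \mathbf{u} + \sum_{i=1}^{d} A_i \partial_{x_i}\mathbf{u} = 0$ on $\prod_{i=1}^d[0,1]$ with periodic boundary conditions, where the $A_i$ are real constant matrices such that every real linear combination $\sum_i \alpha_i A_i$ is diagonalizable with real eigenvalues. Let $\mathcal{L}$ be a linear finite difference scheme for this system on the uniform grid with $\Delta x_j = 1/N_j$, with Fourier symbol matrix $Q_{\mathcal{L}}(\mathbf{k})$, let $Q_{\mathcal{L}^*}(\mathbf{k})$ be the Fourier symbol matrix of the backward scheme $\mathcal{L}^*$, and let $Q_B(\mathbf{k}) = Q_{\mathcal{L}}(\mathbf{k})\left(I + \tfrac12\left(I - Q_{\mathcal{L}^*}(\mathbf{k})Q_{\mathcal{L}}(\mathbf{k})\right)\right)$ be the Fourier symbol matrix of the BFECC scheme based on $\mathcal{L}$. Suppose that for all $\mathbf{k}\in\mathcal{F}_{\mathbf{N}}$: (1) $Q_{\mathcal{L}^*}(\mathbf{k}) = \overline{Q_{\mathcal{L}}(\mathbf{k})}$ (entrywise complex conjugate); (2) $Q_{\mathcal{L}^*}(\mathbf{k})Q_{\mathcal{L}}(\mathbf{k}) = Q_{\mathcal{L}}(\mathbf{k})Q_{\mathcal{L}^*}(\mathbf{k})$; (3) $\mathrm{Re}(Q_{\mathcal{L}}(\mathbf{k}))$ and $\mathrm{Im}(Q_{\mathcal{L}}(\mathbf{k}))$ (entrywise real and imaginary parts) are diagonalizable with real eigenvalues. Then $|\rho(Q_B(\mathbf{k}))| \le 1$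 for all $\mathbf{k}\in\mathcal{F}_{\mathbf{N}}$ if and only if $|\rho(Q_{\mathcal{L}}(\mathbf{k}))|\le 2$ for all $\mathbf{k}\in\mathcal{F}_{\mathbf{N}}$, where $\rho$ denotes spectral radius.
   Context: Grid: $\mathbf{N}=(N_1,\dots,N_d)$, grid indices $\mathbf{j}\in\mathcal{D}_{\mathbf{N}}=\mathbb{Z}^d\cap\prod_i[0,N_i-1]$, grid points $\mathbf{x}_{\mathbf{j}}=(j_1\Delta x_1,\dots,j_d\Delta x_d)$, numerical solution $\mathbf{U}^n_{\mathbf{j}}\approx \mathbf{u}(\mathbf{x}_{\mathbf{j}},t_n)$, and $\mathbf{U}^{n+1}=\mathcal{L}\mathbf{U}^n$ with $\mathcal{L}$ linear. Dual index set $\mathcal{F}_{\mathbf{N}}=\mathbb{Z}^d\cap\prod_i[1-N_i,N_i-1]$. Writing $\mathbf{U}^n_{\mathbf{j}}=\sum_{\mathbf{k}\in\mathcal{F}_{\mathbf{N}}}\mathbf{C}^n_{\mathbf{k}}e^{2\pi i\mathbf{k}\cdot\mathbf{x}_{\mathbf{j}}}$, linearity gives $\mathbf{C}^{n+1}_{\mathbf{k}}=Q_{\mathcal{L}}(\mathbf{k})\mathbf{C}^n_{\mathbf{k}}$; $Q_{\mathcal{L}}(\mathbf{k})$ is the Fourier symbol matrix. The backward scheme $\mathcal{L}^*$ is the scheme $\mathcal{L}$ applied to the time-reversed system $\partial_t\mathbf{u}-\sum_i A_i\partial_{x_i}\mathbf{u}=0$. The BFECC scheme based on $\mathcal{L}$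 updates $\mathbf{U}^n$ by: $\tilde{\mathbf{U}}^{n+1}=\mathcal{L}\mathbf{U}^n$; $\tilde{\mathbf{U}}^n=\mathcal{L}^*\tilde{\mathbf{U}}^{n+1}$; $\mathbf{U}^{n+1}=\mathcal{L}(\mathbf{U}^n+\tfrac12(\mathbf{U}^n-\tilde{\mathbf{U}}^n))$; its Fourier symbol matrix is $Q_B$ as given. *)

From HB Require Import structures.
From mathcomp Require Import all_boot all_order all_algebra.
Set Warnings "-notation-overridden,-ambiguous-paths".
From mathcomp Require Import mxred.
From mathcomp Require Import complex.
From mathcomp Require Import boolp classical_sets reals.
Set Implicit Arguments. Unset Strict Implicit. Unset Printing Implicit Defensive.
Import Order.TTheory GRing.Theory Num.Theory.
Local Open Scope ring_scope.
Local Open Scope classical_set_scope.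

Definition cmx (R : realType) (m : nat) (A : 'M[R]_m) : 'M[R[i]]_m :=
  map_mx (fun x : R => (x +i* 0)%C) A.

Definition conj_mx (R : realType) (m : nat) (Q : 'M[R[i]]_m) : 'M[R[i]]_m :=
  map_mx (fun z : R[i] => z^*) Q.
Definition Re_mx (R : realType) (m : nat) (Q : 'M[R[i]]_m) : 'M[R]_m :=
  map_mx (@complex.Re R) Q.
Definition Im_mx (R : realType) (m : nat) (Q : 'M[R[i]]_m) : 'M[R]_m :=
  map_mx (@complex.Im R) Q.

Definition diag_real_eig (R : realType) (m : nat) (A : 'M[R]_m) : Prop :=
  diagonalizable (cmx A) /\
  (forall l : R[i], eigenvalue (cmx A) l -> complex.Im l = 0).

(* Spectral radius: the largest modulus of an eigenvalue (0 if there is none). *)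
Definition spectral_radius (R : realType) (m : nat) (Q : 'M[R[i]]_m) : R :=
  sup [set Normc.normc l | l in [set l : R[i] | eigenvalue Q l]].

Definition in_FN (d : nat) (N : 'I_d -> nat) (k : 'I_d -> int) : Prop :=
  forall i : 'I_d, (1 - (N i)%:Z <= k i) /\ (k i <= (N i)%:Z - 1).

Definition bfecc_symbol (R : realType) (m : nat) (QL QLs : 'M[R[i]]_m) : 'M[R[i]]_m :=
  QL *m (1%:M + 2^-1 *: (1%:M - QLs *m QL)).

From HB Require Import structures.
From mathcomp Require Import all_boot all_order all_algebra.
From mathcomp Require Import mxred complex.
From mathcomp Require Import boolp classical_sets reals.
From mathcomp.algebra_tactics Require Import ring lra.
Set Implicit Arguments. Unset Strict Implicit. Unset Printing Implicit Defensive.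
Import Order.TTheory GRing.Theory Num.Theory.
Local Open Scope ring_scope.

(* Write Q = X + iY with X, Y the real and imaginary parts of Q, so that the
   entrywise conjugate is X - iY.  If Q commutes with its conjugate then X and
   Y commute; being diagonalizable with real spectra, they are diagonalized by
   one change of basis P.  Then P conjugates Q to diag(l_j), conj(Q) to
   diag(conj l_j), and the BFECC symbol to diag(l_j (1 + (1 - |l_j|^2) / 2)).
   For r = |l_j| >= 0 one has r |3 - r^2| / 2 <= 1 exactly when r <= 2. *)

Section ConjmxLinear.
Variables (F : fieldType) (m n : nat) (V : 'M[F]_(m, n)).

Lemma conjmx_is_linear : linear (conjmx V).
Proof. by move=> a f g; rewrite /conjmx mulmxDr mulmxDl -scalemxAr -scalemxAl. Qed.

HB.instance Definition _ :=
  GRing.isLinear.Build F 'M[F]_n 'M[F]_m _ (conjmx V) conjmx_is_linear.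

End ConjmxLinear.

Section UnitConjugation.
Variables (F : fieldType) (n : nat) (P : 'M[F]_n).
Hypothesis P_unit : P \in unitmx.

Lemma eigenvalue_conjumx (f : 'M[F]_n) : eigenvalue (conjmx P f) =1 eigenvalue f.
Proof.
have sub_eig (V g : 'M[F]_n) : V \in unitmx ->
    {subset eigenvalue (conjmx V g) <= eigenvalue g}.
  by move=> V_unit; apply: eigenvalue_conjmx; rewrite ?stablemx_unit ?row_free_unit.
move=> a; apply/idP/idP; first exact: sub_eig.
by rewrite -{1}(conjmxK f P_unit); apply: sub_eig; rewrite unitmx_inv.
Qed.

Lemma conjumxM : {morph conjmx P : f g / f *m g}.
Proof. by move=> f g; rewrite conjmxM ?inE ?stablemx_unit. Qed.

Lemma conjumx1 : conjmx P 1%:M = 1%:M.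
Proof. by rewrite conjmx_scalar ?row_free_unit. Qed.

End UnitConjugation.

Lemma eigenvalue_diag_mx (F : fieldType) n (d : 'rV[F]_n) a :
  eigenvalue (diag_mx d) a <-> exists j, a = d 0 j.
Proof.
split=> [/eigenvalueP [v vd v0] | [j ->]].
  have [j vj] : exists j, v 0 j != 0.
    apply/existsP; apply: contraR v0 => /existsPn v0; apply/eqP/matrixP => i j.
    by rewrite !mxE (ord1 i); apply/eqP; rewrite -[_ == _]negbK v0.
  exists j; apply: (mulIf vj); move/matrixP: vd => /(_ 0 j).
  by rewrite mul_mx_diag !mxE mulrC => <-.
apply/eigenvalueP; exists (delta_mx 0 j).
  apply/matrixP => i k; rewrite mul_mx_diag !mxE (ord1 i) eqxx /=.
  by case: eqP => [->|_]; rewrite ?mulr1 ?mul1r ?mulr0 ?mul0r.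
by apply/eqP => /matrixP/(_ 0 j)/eqP; rewrite !mxE !eqxx oner_eq0.
Qed.

Lemma norm_sup_le (R : realType) (S : set R) (b : R) :
  has_ubound S -> (forall x, S x -> 0 <= x) -> 0 <= b ->
  `|sup S| <= b <-> ubound S b.
Proof.
move=> ubS S_ge0 b_ge0; have [->|/set0P[x Sx]] := eqVneq S set0.
  by rewrite sup0 normr0; split=> // _ x.
have sup_ge0 : 0 <= sup S := le_trans (S_ge0 x Sx) (ub_le_sup ubS Sx).
rewrite ger0_norm //; split=> [le_b y Sy | ub_b]; last exact: ge_sup (ex_intro _ x Sx) ub_b.
exact: le_trans (ub_le_sup ubS Sy) le_b.
Qed.

Section BfeccGain.
Variable R : realType.

Lemma bfecc_real_gain_le1 (r : R) : 0 <= r ->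
  r * `|1 + 2^-1 * (1 - r ^+ 2)| <= 1 <-> r <= 2.
Proof.
move=> r_ge0; rewrite -[r in r * _]ger0_norm // -normrM ler_norml.
(* 1 - r (3 - r^2) / 2 = (r - 1)^2 (r + 2) / 2
   and 1 + r (3 - r^2) / 2 = (r + 1)^2 (2 - r) / 2 *)
have upper : r * (1 + 2^-1 * (1 - r ^+ 2)) <= 1.
  have : 0 <= (r - 1) ^+ 2 * (r + 2) by rewrite mulr_ge0 ?sqr_ge0 //; lra.
  nra.
have sq_gt0 : 0 < (r + 1) ^+ 2 by rewrite exprn_gt0 //; lra.
rewrite upper andbT; split=> [lower | le_r2].
  have : 0 <= (r + 1) ^+ 2 * (2 - r) by nra.
  by rewrite pmulr_rge0 //; lra.
have : 0 <= (r + 1) ^+ 2 * (2 - r) by rewrite mulr_ge0 ?sqr_ge0 //; lra.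
nra.
Qed.

Lemma normc_ge0 (z : R[i]) : 0 <= Normc.normc z.
Proof. by case: z => a b; apply: sqrtr_ge0. Qed.

Lemma bfecc_gain_le1 (z : R[i]) :
  Normc.normc (z * (1 + 2^-1 * (1 - z^* * z))) <= 1 <-> Normc.normc z <= 2.
Proof.
set r := Normc.normc z.
have zz : z^* * z = (r ^+ 2)%:C%C.
  rewrite /r; case: (z) => a b /=; rewrite sqr_sqrtr ?addr_ge0 ?sqr_ge0 //.
  by apply/eqP; rewrite eq_complex /=; apply/andP; split; apply/eqP; ring.
have normc_real (s : R) : Normc.normc s%:C%C = `|s|.
  by rewrite /= expr0n /= addr0 sqrtr_sqr.
have gain_real (s : R) : 1 + 2^-1 * (1 - s%:C%C) = (1 + 2^-1 * (1 - s))%:C%C.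
  by rewrite rmorphD rmorphM rmorphB rmorph1 fmorphV rmorph_nat.
rewrite zz gain_real Normc.normcM normc_real.
exact/bfecc_real_gain_le1/normc_ge0.
Qed.

End BfeccGain.

Section ComplexMatrices.
Variables (R : realType) (m : nat).
Implicit Types (P Q A B : 'M[R[i]]_m) (c e : 'rV[R[i]]_m).

Lemma conjmx_bfecc_symbol P A B : P \in unitmx ->
  conjmx P (bfecc_symbol A B) = bfecc_symbol (conjmx P A) (conjmx P B).
Proof.
move=> P_unit.
rewrite /bfecc_symbol !(conjumxM P_unit) linearD linearZ linearB /=.
by rewrite (conjumx1 P_unit) (conjumxM P_unit).
Qed.

Lemma bfecc_symbol_diag c e :
  bfecc_symbol (diag_mx c) (diag_mx e) =
  diag_mx (\row_j (c 0 j * (1 + 2^-1 * (1 - e 0 j * c 0 j)))).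
Proof.
apply/matrixP => i j; rewrite /bfecc_symbol mulmx_diag mul_diag_mx !mxE.
by have [->|_] := eqVneq i j; rewrite ?mulr1n // !mulr0n subr0 mulr0 addr0 mulr0.
Qed.

Lemma spectral_radius_le Q n (e : 'I_n -> R[i]) (b : R) :
  (forall l, eigenvalue Q l <-> exists j, l = e j) -> 0 <= b ->
  `|spectral_radius Q| <= b <-> forall j, Normc.normc (e j) <= b.
Proof.
move=> eigQ b_ge0; rewrite /spectral_radius norm_sup_le //; last 2 first.
- exists (\sum_j Normc.normc (e j)) => _ [l /eigQ[j ->] <-].
  by rewrite (bigD1 j) //= lerDl sumr_ge0 // => k _; apply: normc_ge0.
- by move=> _ [l _ <-]; apply: normc_ge0.
split=> [ub_b j | le_b _ [l /eigQ[j ->] <-] //].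
by apply: ub_b; exists (e j) => //; apply/eigQ; exists j.
Qed.

Lemma spectral_radius_conjmx_diag P Q c (b : R) :
  P \in unitmx -> conjmx P Q = diag_mx c -> 0 <= b ->
  `|spectral_radius Q| <= b <-> forall j, Normc.normc (c 0 j) <= b.
Proof.
move=> P_unit PQ; apply: spectral_radius_le => l.
by rewrite -(eigenvalue_conjumx P_unit) PQ; apply: eigenvalue_diag_mx.
Qed.

Lemma cmx_Re_Im Q : Q = cmx (Re_mx Q) + 'i%C *: cmx (Im_mx Q).
Proof. by apply/matrixP => i j; rewrite !mxE [LHS]complexE. Qed.

Lemma conj_mx_Re_Im Q : conj_mx Q = cmx (Re_mx Q) - 'i%C *: cmx (Im_mx Q).
Proof.
apply/matrixP => i j; rewrite !mxE; case: (Q i j) => a b.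
by apply/eqP; rewrite eq_complex /=; apply/andP; split; apply/eqP; ring.
Qed.

Lemma comm_Re_Im_mx Q : conj_mx Q *m Q = Q *m conj_mx Q ->
  comm_mx (cmx (Re_mx Q)) (cmx (Im_mx Q)).
Proof.
set X := cmx _; set Y := cmx _; set Qs := conj_mx Q => normalQ.
have XE : X = Qs + 'i%C *: Y by rewrite /Qs conj_mx_Re_Im subrK.
have QE : Q = Qs + (2 * 'i%C) *: Y.
  by rewrite {1}(cmx_Re_Im Q) -/X -/Y XE -addrA -scalerDl mulr2n mulrDl !mul1r.
have two_i_neq0 : 2 * 'i%C != 0 :> R[i] by rewrite mulf_neq0 ?pnatr_eq0 ?neq0Ci.
have QsY : Qs *m Y = Y *m Qs.
  move: normalQ; rewrite QE mulmxDr mulmxDl -scalemxAr -scalemxAl.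
  by move=> /addrI /(scalerI two_i_neq0).
by rewrite /comm_mx XE mulmxDl mulmxDr QsY -scalemxAl -scalemxAr.
Qed.

Lemma codiag_conj_mx Q :
  diag_real_eig (Re_mx Q) -> diag_real_eig (Im_mx Q) ->
  conj_mx Q *m Q = Q *m conj_mx Q ->
  exists P c, [/\ P \in unitmx, conjmx P Q = diag_mx c
                & conjmx P (conj_mx Q) = diag_mx (\row_j (c 0 j)^*)].
Proof.
move=> [diagX realX] [diagY realY] /comm_Re_Im_mx commXY.
set X := cmx _ in diagX realX commXY; set Y := cmx _ in diagY realY commXY.
have : codiagonalizable [:: X; Y].
  apply/codiagonalizableP; split=> [A B|A].
    by rewrite !inE => /orP[]/eqP-> /orP[]/eqP->; rewrite /comm_mx.
  by rewrite !inE => /orP[]/eqP->.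
case=> P P_unit /and3P[/similar_diagPex[x /eqP PX] /similar_diagPex[y /eqP PY] _].
have real_diag A d j : (forall l, eigenvalue A l -> complex.Im l = 0) ->
    conjmx P A = diag_mx d -> complex.Im (d 0 j) = 0.
  move=> realA PA; apply: realA; rewrite -(eigenvalue_conjumx P_unit) PA.
  by apply/eigenvalue_diag_mx; exists j.
exists P, (x + 'i%C *: y); split=> //.
  by rewrite {1}(cmx_Re_Im Q) linearD linearZ /= PX PY linearD linearZ.
rewrite conj_mx_Re_Im linearB linearZ /= PX PY -linearZ -linearB; congr diag_mx.
apply/rowP => j; rewrite !mxE.
move: (real_diag _ _ j realX PX) (real_diag _ _ j realY PY).
case: (x 0 j) => a b /= ->; case: (y 0 j) => a' b' /= ->.
by apply/eqP; rewrite eq_complex /=; apply/andP; split; apply/eqP; ring.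
Qed.

Lemma bfecc_stable_iff Q :
  diag_real_eig (Re_mx Q) -> diag_real_eig (Im_mx Q) ->
  conj_mx Q *m Q = Q *m conj_mx Q ->
  `|spectral_radius (bfecc_symbol Q (conj_mx Q))| <= 1 <->
  `|spectral_radius Q| <= 2.
Proof.
move=> ReQ ImQ normalQ.
have [P [c [P_unit PQ PQs]]] := codiag_conj_mx ReQ ImQ normalQ.
have PB : conjmx P (bfecc_symbol Q (conj_mx Q)) =
    diag_mx (\row_j (c 0 j * (1 + 2^-1 * (1 - (c 0 j)^* * c 0 j)))).
  rewrite conjmx_bfecc_symbol // PQ PQs bfecc_symbol_diag.
  by congr diag_mx; apply/rowP => j; rewrite !mxE.
rewrite (spectral_radius_conjmx_diag P_unit PB) ?ler01 //.
rewrite (spectral_radius_conjmx_diag P_unit PQ) ?ler0n //.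
by split=> le_b j; have := le_b j; rewrite mxE => /bfecc_gain_le1.
Qed.

End ComplexMatrices.

Theorem theorem2p1
  (R : realType) (d m : nat) (hd : (1 <= d)%N)
  (A : 'I_d -> 'M[R]_m)
  (hyperbolic : forall alpha : 'I_d -> R,
      diag_real_eig (\sum_(i < d) alpha i *: A i))
  (N : 'I_d -> nat) (hN : forall i, (1 <= N i)%N)
  (QL QLs : ('I_d -> int) -> 'M[R[i]]_m)
  (h1 : forall k, in_FN N k -> QLs k = conj_mx (QL k))
  (h2 : forall k, in_FN N k -> QLs k *m QL k = QL k *m QLs k)
  (h3 : forall k, in_FN N k ->
      diag_real_eig (Re_mx (QL k)) /\ diag_real_eig (Im_mx (QL k))) :
  (forall k, in_FN N k -> `|spectral_radius (bfecc_symbol (QL k) (QLs k))| <= 1)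
  <-> (forall k, in_FN N k -> `|spectral_radius (QL k)| <= 2).
Proof.
have stable_at k : in_FN N k ->
    `|spectral_radius (bfecc_symbol (QL k) (QLs k))| <= 1 <->
    `|spectral_radius (QL k)| <= 2.
  move=> hk; have [ReQ ImQ] := h3 k hk; have normalQ := h2 k hk.
  rewrite (h1 k hk) in normalQ *.
  exact: bfecc_stable_iff.
by split=> stable k hk; apply/(stable_at k hk)/stable.
Qed.
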